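(* Let $A,B\in\mathbb{Z}$ with $4A^3+27B^2\ne0$, let $M$ be a positive integer with $\max\{10\sqrt{|A|},5\sqrt[3]{|B|}\}\le M$, let $D$ be a squarefree positive integer and $E_D: y^2=x^3+D^2Ax+D^3B$. Let $P,Q\in E_D(\mathbb{Q})$ with $MD\le x(P)<x(Q)$ and $y(P)y(Q)<0$. Then for every real $\mu$ with $1<\mu\le x(Q)/x(P)$, \[x(P)\le x(P+Q)\le \frac{(2\mu+1)^2}{(\mu-1)^2}\,x(P).\] *)

From HB Require Import structures.
From mathcomp Require Import all_boot all_order all_algebra.
From mathcomp Require Import reals exp.
Set Implicit Arguments. Unset Strict Implicit. Unset Printing Implicit Defensive.
Import Order.TTheory GRing.Theory Num.Theory.
Local Open Scope ring_scope.

Definition squarefree (n : nat) : Prop :=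
  forall d : nat, (d * d %| n)%N -> d = 1%N.

Inductive ecpoint := EInf | EAff of rat & rat.

Definition on_curve (a b : rat) (P : ecpoint) : Prop :=
  match P with
  | EInf => True
  | EAff x y => y ^+ 2 = x ^+ 3 + a * x + b
  end.

Definition ec_add (a : rat) (P Q : ecpoint) : ecpoint :=
  match P, Q with
  | EInf, _ => Q
  | _, EInf => P
  | EAff x1 y1, EAff x2 y2 =>
      if x1 == x2 then
        if y1 == - y2 then EInf
        else let l := (3 * x1 ^+ 2 + a) / (2 * y1) in
             let x3 := l ^+ 2 - 2 * x1 in
             EAff x3 (l * (x1 - x3) - y1)
      else let l := (y2 - y1) / (x2 - x1) in
           let x3 := l ^+ 2 - x1 - x2 in
           EAff x3 (l * (x1 - x3) - y1)
  end.

(* With l the slope of the chord through P = (p, y1) and Q = (q, y2) we have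
   x(P + Q) = l^2 - p - q, so both bounds are bounds on
   (y2 - y1)^2 = y1^2 + y2^2 - 2 y1 y2.  Since x(P) >= M D, the choice of M
   makes the coefficients of the twist small: 100 |a| <= p^2 and
   125 |b| <= p^3, so y^2 <= (11/10) x^3 at both points.  As
   y1 y2 < 0 the cross term is positive, which gives x(P + Q) >= p; it is at
   most 3 p q^2, which gives x(P + Q) <= p ((2 q + p) / (q - p))^2.  Finally
   (2 t + 1) / (t - 1) decreases for t > 1, and q / p >= mu. *)

From mathcomp Require Import all_boot all_order all_algebra.
From mathcomp Require Import reals exp.
From mathcomp Require Import ring lra.
Import Order.TTheory GRing.Theory Num.Theory.
Local Open Scope ring_scope.

Lemma powR_invnK {R : realType} {n : nat} {x : R} :
  (0 < n)%N -> 0 <= x -> (x `^ n%:R^-1) ^+ n = x.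
Proof.
move=> n_gt0 x_ge0.
by rewrite -powR_mulrn ?powR_ge0 // -powRrM mulVf ?pnatr_eq0 -?lt0n // powRr1.
Qed.

Lemma int_norm_le_of_root (R : realType) (n c m : nat) (z : int) : (0 < n)%N ->
  c%:R * `|z%:~R : R| `^ n%:R^-1 <= m%:R -> (c ^ n)%:R * `|z| <= m%:Z ^+ n.
Proof.
move=> n_gt0 le_root_m; rewrite -(ler_int R) rmorphM !rmorphXn /= natz intr_norm.
rewrite -{1}(powR_invnK n_gt0 (normr_ge0 (z%:~R : R))) -exprMn.
by apply: lerXn2r; rewrite ?nnegrE ?mulr_ge0 ?powR_ge0 ?ler0n.
Qed.

Lemma twist_coeff_le {F : numDomainType} {k c m d : nat} {z : int} {x : F} :
  c%:R * `|z| <= m%:Z ^+ k -> (m * d)%:R <= x ->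
  c%:R * `|(d ^ k)%:R * z%:~R| <= x ^+ k.
Proof.
move=> le_cz_m le_md_x; rewrite normrM normr_nat mulrCA.
have le_cz_m' : c%:R * `|z%:~R| <= m%:R ^+ k :> F.
  by move: le_cz_m; rewrite -(ler_int F) rmorphM rmorphXn /= natz intr_norm.
apply: (le_trans (ler_wpM2l (ler0n _ _) le_cz_m')).
rewrite -natrX -natrM -expnMn natrX mulnC.
by apply: lerXn2r; rewrite ?nnegrE ?ler0n ?(le_trans (ler0n _ _) le_md_x).
Qed.

Section ChordThroughOppositePoints.
Context {F : realFieldType} {a b p : F}.
Hypothesis p_gt0 : 0 < p.
Hypotheses (a_small : 100 * `|a| <= p ^+ 2) (b_small : 125 * `|b| <= p ^+ 3).

Let b_bounds : - p ^+ 3 <= 125 * b <= p ^+ 3.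
Proof. by rewrite -ler_norml normrM ger0_norm. Qed.

Let ax_bounds x : p <= x -> - (p ^+ 2 * x) <= 100 * (a * x) <= p ^+ 2 * x.
Proof.
move=> le_px; have x_ge0 : 0 <= x by apply: le_trans le_px; apply: ltW.
have /andP[a_ge a_le] : - p ^+ 2 <= 100 * a <= p ^+ 2.
  by rewrite -ler_norml normrM ger0_norm.
by rewrite mulrA -mulNr (ler_wpM2r x_ge0 a_ge) (ler_wpM2r x_ge0 a_le).
Qed.

Let expr_le n x : p <= x -> p ^+ n <= x ^+ n.
Proof. by move=> le_px; apply: lerXn2r; rewrite // nnegrE ?ltW ?(lt_le_trans p_gt0). Qed.

Lemma curve_sqr_y_le x y : p <= x -> y ^+ 2 = x ^+ 3 + a * x + b ->
  y ^+ 2 <= 11 / 10 * x ^+ 3.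
Proof.
move=> le_px ->; have /andP[_ ax_le] := ax_bounds x le_px.
have /andP[_ b_le] := b_bounds.
have p2x : p ^+ 2 * x <= x ^+ 3.
  by rewrite [x ^+ 3]exprSr ler_wpM2r ?expr_le ?(le_trans (ltW p_gt0)).
have := expr_le 3 x le_px; have := exprn_gt0 3 p_gt0; lra.
Qed.

Context {q y1 y2 : F}.
Hypotheses (lt_pq : p < q) (y1_eq : y1 ^+ 2 = p ^+ 3 + a * p + b).
Hypotheses (y2_eq : y2 ^+ 2 = q ^+ 3 + a * q + b) (y1y2_lt0 : y1 * y2 < 0).

Let sqr_y2_sub_y1 :
  (y2 - y1) ^+ 2 = p ^+ 3 + q ^+ 3 + a * p + a * q + 2 * b - 2 * (y1 * y2).
Proof. by rewrite sqrrB y1_eq y2_eq; ring. Qed.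

Lemma chord_sqr_ge : (2 * p + q) * (q - p) ^+ 2 <= (y2 - y1) ^+ 2.
Proof.
have /andP[ap_ge _] := ax_bounds p (lexx p).
have /andP[aq_ge _] := ax_bounds q (ltW lt_pq).
have /andP[b_ge _] := b_bounds.
have p3_le : p ^+ 3 <= p ^+ 2 * q by rewrite exprSr ler_pM2l ?exprn_gt0 ?ltW.
have := y1y2_lt0; have := exprn_gt0 3 p_gt0.
rewrite sqr_y2_sub_y1; lra.
Qed.

Lemma chord_sqr_le : (y2 - y1) ^+ 2 <= (p + q) * (q - p) ^+ 2 + p * (2 * q + p) ^+ 2.
Proof.
have q_gt0 : 0 < q := lt_trans p_gt0 lt_pq.
have y1y2_le : - (2 * (y1 * y2)) <= 3 * (p * q ^+ 2).
  have y1_le := curve_sqr_y_le p y1 (lexx p) y1_eq.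
  have y2_le := curve_sqr_y_le q y2 (ltW lt_pq) y2_eq.
  have y12_le := ler_pM (sqr_ge0 y1) (sqr_ge0 y2) y1_le y2_le.
  have pq_le : p ^+ 3 * q ^+ 3 <= p ^+ 2 * q ^+ 4.
    have -> : p ^+ 3 * q ^+ 3 = p ^+ 2 * q ^+ 3 * p by ring.
    have -> : p ^+ 2 * q ^+ 4 = p ^+ 2 * q ^+ 3 * q by ring.
    by rewrite ler_pM2l ?mulr_gt0 ?exprn_gt0 ?ltW.
  (* 4 y1^2 y2^2 <= 4 (11/10)^2 p^3 q^3 <= 9 p^2 q^4 *)
  have lhs_ge0 : 0 <= - (2 * (y1 * y2)) by have := y1y2_lt0; lra.
  have rhs_ge0 : 0 <= 3 * (p * q ^+ 2) by rewrite !mulr_ge0 ?exprn_ge0 ?ltW.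
  rewrite -(ler_pXn2r (_ : 0 < 2)%N) ?nnegrE //.
  have := mulr_gt0 (exprn_gt0 3 p_gt0) (exprn_gt0 3 q_gt0).
  lra.
have /andP[_ ap_le] := ax_bounds p (lexx p).
have /andP[_ aq_le] := ax_bounds q (ltW lt_pq).
have /andP[_ b_le] := b_bounds.
have := exprn_gt0 3 p_gt0; have := mulr_gt0 (exprn_gt0 2 p_gt0) q_gt0.
rewrite sqr_y2_sub_y1; lra.
Qed.

Lemma chord_x_bounds : let x3 := ((y2 - y1) / (q - p)) ^+ 2 - p - q in
  p <= x3 <= p * (2 * q + p) ^+ 2 / (q - p) ^+ 2.
Proof.
have d_gt0 : 0 < (q - p) ^+ 2 by rewrite exprn_gt0 // subr_gt0.
have lower : 2 * p + q <= (y2 - y1) ^+ 2 / (q - p) ^+ 2.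
  by rewrite ler_pdivlMr // chord_sqr_ge.
have upper : (y2 - y1) ^+ 2 / (q - p) ^+ 2 <= p + q + p * (2 * q + p) ^+ 2 / (q - p) ^+ 2.
  by rewrite ler_pdivrMr // mulrDl divfK ?gt_eqF // chord_sqr_le.
rewrite /= expr_div_n; apply/andP; split; lra.
Qed.

End ChordThroughOppositePoints.

Lemma sqr_chord_ratio_le (R : realFieldType) (p q mu : R) :
  0 < p -> 1 < mu -> mu <= q / p ->
  p * (2 * q + p) ^+ 2 / (q - p) ^+ 2 <= (2 * mu + 1) ^+ 2 / (mu - 1) ^+ 2 * p.
Proof.
move=> p_gt0 mu_gt1; rewrite ler_pdivlMr // => le_mup_q.
have qp_gt0 : 0 < q - p by nra.
have mu1_gt0 : 0 < mu - 1 by rewrite subr_gt0.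
have le_ratio : (2 * q + p) / (q - p) <= (2 * mu + 1) / (mu - 1).
  rewrite ler_pdivrMr // mulrAC ler_pdivlMr //; nra.
rewrite -mulrA -!expr_div_n mulrC ler_pM2r //.
by apply: lerXn2r; rewrite // nnegrE divr_ge0 //; lra.
Qed.

Theorem lemma3p7 (R : realType) (A B : int) (M D : nat) (xP yP xQ yQ : rat) :
  4 * A ^+ 3 + 27 * B ^+ 2 != 0 ->
  (0 < M)%N ->
  Num.max (10 * Num.sqrt `|A%:~R : R|) (5 * powR `|B%:~R : R| (3%:R^-1)) <= M%:R ->
  (0 < D)%N -> squarefree D ->
  let a : rat := (D ^ 2)%:R * A%:~R in
  let b : rat := (D ^ 3)%:R * B%:~R in
  on_curve a b (EAff xP yP) -> on_curve a b (EAff xQ yQ) ->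
  (M * D)%:R <= xP -> xP < xQ -> yP * yQ < 0 ->
  forall mu : R, 1 < mu -> mu <= ratr xQ / ratr xP ->
  exists x3 y3 : rat,
    ec_add a (EAff xP yP) (EAff xQ yQ) = EAff x3 y3 /\
    xP <= x3 /\
    ratr x3 <= (2 * mu + 1) ^+ 2 / (mu - 1) ^+ 2 * ratr xP.
Proof.
move=> _ M_gt0 le_max_M D_gt0 _ a b onP onQ le_MD_xP lt_xPQ yPQ_lt0 mu mu_gt1 le_mu.
have [A_le B_le] : 100 * `|A| <= M%:Z ^+ 2 /\ 125 * `|B| <= M%:Z ^+ 3.
  move: le_max_M; rewrite ge_max => /andP[le_A le_B]; split.
    by apply: (@int_norm_le_of_root R 2 10); rewrite // powR12_sqrt.
  by apply: (@int_norm_le_of_root R 3 5).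
have xP_gt0 : 0 < xP by apply: lt_le_trans le_MD_xP; rewrite ltr0n muln_gt0 M_gt0.
have a_small := twist_coeff_le A_le le_MD_xP.
have b_small := twist_coeff_le B_le le_MD_xP.
have /andP[xP_le x3_le] := chord_x_bounds xP_gt0 a_small b_small lt_xPQ onP onQ yPQ_lt0.
pose l := (yQ - yP) / (xQ - xP).
exists (l ^+ 2 - xP - xQ), (l * (xP - (l ^+ 2 - xP - xQ)) - yP).
split; first by rewrite /ec_add (lt_eqF lt_xPQ).
split; first exact: xP_le.
move: x3_le; rewrite -(ler_rat R) => /le_trans; apply.
rewrite fmorph_div rmorphM !rmorphXn rmorphD rmorphB rmorphM rmorph_nat.
by apply: sqr_chord_ratio_le; rewrite ?ltr0q.
Qed.
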